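(* If there is no infinite $T$-rewrite sequence starting from any string of the canonical form $\lhd w\rhd$ with $w\in\{0_2,1_2,0_3,1_3,2_3\}^*$, then $T$ is terminating (on all strings over its alphabet).
   Context: A string rewriting system (SRS) $R$ over an alphabet $\Sigma$ is a set of pairs $\ell\to r$ of strings; it induces the rewrite relation $u\ell v\to_R urv$ ($u,v\in\Sigma^*$). $R$ is terminating if there is no infinite sequence $s_0\to_R s_1\to_R\cdots$. Alphabet: $\{0_2,1_2,0_3,1_3,2_3,\lhd,\rhd\}$. $T=D_T\cup A\cup B$ where $D_T=\{0_2\rhd\to\rhd,\ 1_2\rhd\to 2_3\rhd\}$; $A=\{0_20_3\to0_30_2,\ 0_21_3\to0_31_2,\ 0_22_3\to1_30_2,\ 1_20_3\to1_31_2,\ 1_21_3\to2_30_2,\ 1_22_3\to2_31_2\}$; $B=\{\lhd0_3\to\lhd1_2,\ \lhd1_3\to\lhd0_20_2,\ \lhd2_3\to\lhd0_21_2\}$. *)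

From Stdlib Require Import List.
Import ListNotations.

Inductive sym : Type := s02 | s12 | s03 | s13 | s23 | lt_ | rt_.
(* s02 = 0_2, s12 = 1_2, s03 = 0_3, s13 = 1_3, s23 = 2_3, lt_ = ◁, rt_ = ▷ *)

Definition word := list sym.

Definition rules_T : list (word * word) :=
  [ ([s02; rt_], [rt_]);
    ([s12; rt_], [s23; rt_]);
    ([s02; s03], [s03; s02]);
    ([s02; s13], [s03; s12]);
    ([s02; s23], [s13; s02]);
    ([s12; s03], [s13; s12]);
    ([s12; s13], [s23; s02]);
    ([s12; s23], [s23; s12]);
    ([lt_; s03], [lt_; s12]);
    ([lt_; s13], [lt_; s02; s02]);
    ([lt_; s23], [lt_; s02; s12]) ].

Definition stepT (s t : word) : Prop :=
  exists u v l r, In (l, r) rules_T /\ s = u ++ l ++ v /\ t = u ++ r ++ v.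

Definition infinite_from (s : word) : Prop :=
  exists f : nat -> word, f 0 = s /\ forall n, stepT (f n) (f (S n)).

Definition terminatingT : Prop := forall s, ~ infinite_from s.

Definition inner_sym (a : sym) : Prop := a <> lt_ /\ a <> rt_.

From Stdlib Require Import List.
Import ListNotations.
From Stdlib Require Import Classical ClassicalEpsilon Lia Wf_nat Wellfounded.

(* Work with strong normalisation (SN: every rewrite sequence is
   finite, i.e. accessibility for the reversed step relation); classically a
   string is SN exactly when no infinite sequence starts from it, so the
   hypothesis says that every canonical string ◁w▷ is SN.  SN passes to
   substrings, since rewriting is closed under contexts; hence w, ◁w and w▷
   are SN too.  Every left-hand side of T has length two, never starts with ▷
   and never ends with ◁, so no redex can straddle a boundary behind a ▷ or
   in front of a ◁; moreover rules preserve a trailing ▷ and a leading ◁.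
   Thus for a boundary of that kind a rewrite of a ++ b acts inside a or
   inside b, and SN a, SN b give SN (a ++ b).  Cutting an arbitrary string
   at its first ◁ or ▷ and inducting on the length, every string s (and ◁s)
   is SN, which is termination. *)

Section StrongNormalisation.
Variables (A : Type) (R : A -> A -> Prop).

Definition sn (a : A) : Prop := Acc (fun y x => R x y) a.

Lemma not_sn_step (a : A) : ~ sn a -> exists b, R a b /\ ~ sn b.
Proof.
  intro Ha. apply NNPP. intro Hno. apply Ha. constructor. intros b Hab.
  apply NNPP. intro Hb. apply Hno. exists b. split; assumption.
Qed.

Lemma not_sn_infinite (a : A) :
  ~ sn a -> exists f : nat -> A, f 0 = a /\ forall n, R (f n) (f (S n)).
Proof.
  intro Ha.
  pose (next (x : {x | ~ sn x}) :=
          constructive_indefinite_description _ (not_sn_step _ (proj2_sig x))).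
  pose (g (x : {x | ~ sn x}) :=
          exist (fun y => ~ sn y) (proj1_sig (next x)) (proj2 (proj2_sig (next x)))).
  exists (fun n => proj1_sig (Nat.iter n g (exist _ a Ha))). split.
  - reflexivity.
  - intro n. exact (proj1 (proj2_sig (next (Nat.iter n g (exist _ a Ha))))).
Qed.

Lemma sn_no_infinite (a : A) :
  sn a -> ~ exists f : nat -> A, f 0 = a /\ forall n, R (f n) (f (S n)).
Proof.
  induction 1 as [a _ IH]. intros (f & Hf0 & Hf).
  apply (IH (f 1)); [rewrite <- Hf0; apply Hf |].
  exists (fun n => f (S n)). split; [reflexivity | intro n; apply Hf].
Qed.

End StrongNormalisation.

Definition SN : word -> Prop := @sn word stepT.

Lemma step_context (x s t y : word) : stepT s t -> stepT (x ++ s ++ y) (x ++ t ++ y).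
Proof.
  intros (u & v & l & r & Hin & -> & ->).
  exists (x ++ u), (v ++ y), l, r.
  split; [exact Hin | split; rewrite !app_assoc; reflexivity].
Qed.

Lemma SN_substring (x s y : word) : SN (x ++ s ++ y) -> SN s.
Proof.
  intro H. remember (x ++ s ++ y) as w eqn:Hw. revert s Hw.
  induction H as [w _ IH]. intros s ->. constructor. intros t Hst.
  eapply IH; [apply step_context; exact Hst | reflexivity].
Qed.

Definition ends_rt (a : word) : Prop := exists a0, a = a0 ++ [rt_].
Definition starts_lt (b : word) : Prop := exists b0, b = lt_ :: b0.

Lemma rule_shape (l r : word) : In (l, r) rules_T ->
  exists x y, l = [x; y] /\ x <> rt_ /\ y <> lt_ /\
              (y = rt_ -> ends_rt r) /\ (x = lt_ -> starts_lt r).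
Proof.
  simpl; intro H; repeat destruct H as [H | H]; try contradiction;
  injection H as <- <-; do 2 eexists;
  repeat split; try discriminate; intro E; try discriminate;
  first [exists []; reflexivity | exists [s23]; reflexivity | eexists; reflexivity].
Qed.

Lemma ends_rt_step (a a' : word) : stepT a a' -> ends_rt a -> ends_rt a'.
Proof.
  intros (u & v & l & r & Hin & -> & ->) [a0 Ha].
  destruct (rule_shape _ _ Hin) as (x & y & -> & _ & _ & Hrt & _).
  destruct v as [| z v _] using rev_ind.
  - rewrite app_nil_r in Ha |- *.
    replace (u ++ [x; y]) with ((u ++ [x]) ++ [y]) in Ha
      by (rewrite <- app_assoc; reflexivity).
    apply app_inj_tail in Ha as [_ ->].
    destruct (Hrt eq_refl) as [r0 ->]. exists (u ++ r0). apply app_assoc.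
  - rewrite !app_assoc in Ha. apply app_inj_tail in Ha as [_ ->].
    exists (u ++ r ++ v). rewrite !app_assoc. reflexivity.
Qed.

Lemma starts_lt_step (b b' : word) : stepT b b' -> starts_lt b -> starts_lt b'.
Proof.
  intros (u & v & l & r & Hin & -> & ->) [b0 Hb].
  destruct (rule_shape _ _ Hin) as (x & y & -> & _ & _ & _ & Hlt).
  destruct u as [| z u]; simpl in Hb |- *; injection Hb as ->.
  - destruct (Hlt eq_refl) as [r0 ->]. eexists; reflexivity.
  - eexists; reflexivity.
Qed.

(* No redex straddles a boundary behind ▷ or in front of ◁, so a step on
   a ++ b rewrites inside a or inside b. *)
Lemma step_split (a b t : word) : stepT (a ++ b) t -> ends_rt a \/ starts_lt b ->
  (exists a', stepT a a' /\ t = a' ++ b) \/ (exists b', stepT b b' /\ t = a ++ b').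
Proof.
  intros (u & v & l & r & Hin & Hs & ->) Hbound.
  destruct (rule_shape _ _ Hin) as (x & y & -> & Hx & Hy & _).
  apply app_eq_app in Hs as [m [[-> Hb] | [-> Hb]]].
  - destruct m as [| z [| z' m]]; simpl in Hb.
    + subst b. rewrite app_nil_r. right. exists (r ++ v).
      split; [exists [], v, [x; y], r; auto | reflexivity].
    + exfalso. injection Hb as <- Hb.
      destruct Hbound as [[a0 Ha] | [b0 Hb0]].
      * apply app_inj_tail in Ha as [_ ->]. contradiction.
      * subst b. injection Hb0 as ->. contradiction.
    + injection Hb as <- <- ->. left. exists (u ++ r ++ m).
      split; [exists u, m, [x; y], r; auto | rewrite !app_assoc; reflexivity].
  - right. exists (m ++ r ++ v).
    split; [exists m, v, [x; y], r; auto | rewrite !app_assoc; reflexivity].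
Qed.

Lemma SN_app (a b : word) : SN a -> SN b -> ends_rt a \/ starts_lt b -> SN (a ++ b).
Proof.
  intro Ha. revert b. induction Ha as [a _ IHa].
  intros b Hb. induction Hb as [b Hb IHb]. intro Hbound.
  constructor. intros t Ht.
  destruct (step_split _ _ _ Ht Hbound) as [(a' & Hs & ->) | (b' & Hs & ->)].
  - apply IHa; [exact Hs | constructor; exact Hb |].
    destruct Hbound; [left; eapply ends_rt_step; eauto | right; assumption].
  - apply IHb; [exact Hs |].
    destruct Hbound; [left; assumption | right; eapply starts_lt_step; eauto].
Qed.

Lemma first_marker (s : word) : Forall inner_sym s \/
  exists x r, Forall inner_sym x /\ (s = x ++ rt_ :: r \/ s = x ++ lt_ :: r).
Proof.
  induction s as [| c s IH]; [left; constructor |].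
  assert (Hc : inner_sym c \/ c = rt_ \/ c = lt_)
    by (destruct c; unfold inner_sym; intuition discriminate).
  destruct Hc as [Hc | [-> | ->]];
    [| right; exists [], s; auto | right; exists [], s; auto].
  destruct IH as [IH | (x & r & Hx & Hs)]; [left; constructor; assumption |].
  right. exists (c :: x), r. split; [constructor; assumption |].
  destruct Hs as [-> | ->]; auto.
Qed.

Lemma SN_all_strings :
  (forall w, Forall inner_sym w -> SN ([lt_] ++ w ++ [rt_])) ->
  forall s, SN s /\ SN (lt_ :: s).
Proof.
  intros Hcanon s.
  induction s as [s IH] using
    (well_founded_induction (wf_inverse_image _ nat _ (@length sym) lt_wf)).
  assert (Hsuffix : forall x c r, s = x ++ c :: r -> SN r /\ SN (lt_ :: r)).
  { intros x c r ->. apply IH. rewrite length_app. simpl. lia. }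
  destruct (first_marker s) as [Hs | (x & r & Hx & [-> | ->])].
  - specialize (Hcanon s Hs).
    split; [exact (SN_substring [lt_] s [rt_] Hcanon)
           | exact (SN_substring [] (lt_ :: s) [rt_] Hcanon)].
  - specialize (Hcanon x Hx). destruct (Hsuffix _ _ _ eq_refl) as [Hr _]. split.
    + replace (x ++ rt_ :: r) with ((x ++ [rt_]) ++ r) by (rewrite <- app_assoc; reflexivity).
      apply SN_app; [| exact Hr | left; exists x; reflexivity].
      apply (SN_substring [lt_] _ []). rewrite app_nil_r. exact Hcanon.
    + replace (lt_ :: x ++ rt_ :: r) with (([lt_] ++ x ++ [rt_]) ++ r)
        by (simpl; rewrite <- app_assoc; reflexivity).
      apply SN_app; [exact Hcanon | exact Hr | left; exists (lt_ :: x); reflexivity].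
  - specialize (Hcanon x Hx). destruct (Hsuffix _ _ _ eq_refl) as [_ Hr]. split.
    + apply SN_app; [exact (SN_substring [lt_] x [rt_] Hcanon) | exact Hr |].
      right. eexists; reflexivity.
    + apply (SN_app (lt_ :: x)); [exact (SN_substring [] (lt_ :: x) [rt_] Hcanon) | exact Hr |].
      right. eexists; reflexivity.
Qed.

Theorem mainTheorem5 :
  (forall w : word, Forall inner_sym w -> ~ infinite_from ([lt_] ++ w ++ [rt_])) ->
  terminatingT.
Proof.
  intros Hcanon s.
  assert (Hcanon_SN : forall w, Forall inner_sym w -> SN ([lt_] ++ w ++ [rt_])).
  { intros w Hw. apply NNPP. intro Hn. exact (Hcanon w Hw (not_sn_infinite _ _ _ Hn)). }
  exact (sn_no_infinite _ _ _ (proj1 (SN_all_strings Hcanon_SN s))).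
Qed.
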